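(* Every pre-Hilbert $*$-category is quasi-abelian, i.e. it is additive, every morphism has a kernel and a cokernel, normal monomorphisms are stable under pushout along arbitrary morphisms, and normal epimorphisms are stable under pullback along arbitrary morphisms.
   Context: A $*$-category is a category equipped with a choice of morphism $f^*\colon Y\to X$ for each morphism $f\colon X\to Y$ such that $1^*=1$, $(gf)^*=f^*g^*$ and $(f^* )^*=f$. A morphism $f$ is an isometry if $f^*f=1$. A kernel of $f$ is an equaliser of $f$ and the zero morphism; a cokernel is dual; a normal monomorphism (resp. epimorphism) is a morphism that is a kernel (resp. cokernel) of some morphism. An orthonormal biproduct of $X_1,X_2$ is a biproduct $(X,s_1,r_1,s_2,r_2)$ with $r_k=s_k^*$. A pre-Hilbert $*$-category is a $*$-category in which (R1) there is a zero object, (R2) every pair of objects has an orthonormal biproduct, (R3) every morphism has an isometric kernel, and (R4) every diagonal $\Delta\colon X\to X\oplus X$ is a normal monomorphism. A category is additive if it has finite biproducts and the induced enrichment in commutative monoids is an enrichment in abelian groups. *)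

Set Implicit Arguments.
Unset Strict Implicit.

Record Category := {
  ob :> Type;
  hom : ob -> ob -> Type;
  idm : forall X, hom X X;
  comp : forall X Y Z, hom Y Z -> hom X Y -> hom X Z;
  comp_assoc : forall X Y Z W (f : hom X Y) (g : hom Y Z) (h : hom Z W),
      comp h (comp g f) = comp (comp h g) f;
  comp_id_l : forall X Y (f : hom X Y), comp (idm Y) f = f;
  comp_id_r : forall X Y (f : hom X Y), comp f (idm X) = f
}.

Arguments hom {c} _ _.
Arguments idm {c} _.
Arguments comp {c X Y Z} _ _.

Notation "g ∘ f" := (comp g f) (at level 40, left associativity).

Section CatDefs.
Variable C : Category.

Definition is_initial (Z : C) : Prop :=
  forall X : C, exists f : hom Z X, forall g : hom Z X, g = f.
Definition is_terminal (Z : C) : Prop :=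
  forall X : C, exists f : hom X Z, forall g : hom X Z, g = f.
Definition is_zero_object (Z : C) : Prop := is_initial Z /\ is_terminal Z.
Definition has_zero_object : Prop := exists Z : C, is_zero_object Z.

Definition is_zero_mor {X Y : C} (f : hom X Y) : Prop :=
  exists (Z : C) (a : hom X Z) (b : hom Z Y), is_zero_object Z /\ f = b ∘ a.

Definition is_equalizer {E X Y : C} (f g : hom X Y) (e : hom E X) : Prop :=
  f ∘ e = g ∘ e /\
  forall (W : C) (h : hom W X), f ∘ h = g ∘ h ->
    exists u : hom W E, e ∘ u = h /\ forall u' : hom W E, e ∘ u' = h -> u' = u.
Definition is_coequalizer {X Y Q : C} (f g : hom X Y) (q : hom Y Q) : Prop :=
  q ∘ f = q ∘ g /\
  forall (W : C) (h : hom Y W), h ∘ f = h ∘ g ->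
    exists u : hom Q W, u ∘ q = h /\ forall u' : hom Q W, u' ∘ q = h -> u' = u.

Definition is_kernel {K X Y : C} (f : hom X Y) (k : hom K X) : Prop :=
  exists z : hom X Y, is_zero_mor z /\ is_equalizer f z k.
Definition is_cokernel {X Y Q : C} (f : hom X Y) (q : hom Y Q) : Prop :=
  exists z : hom X Y, is_zero_mor z /\ is_coequalizer f z q.
Definition has_kernel {X Y : C} (f : hom X Y) : Prop :=
  exists (K : C) (k : hom K X), is_kernel f k.
Definition has_cokernel {X Y : C} (f : hom X Y) : Prop :=
  exists (Q : C) (q : hom Y Q), is_cokernel f q.

Definition normal_mono {K X : C} (m : hom K X) : Prop :=
  exists (Y : C) (f : hom X Y), is_kernel f m.
Definition normal_epi {Y Q : C} (e : hom Y Q) : Prop :=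
  exists (X : C) (f : hom X Y), is_cokernel f e.

Definition is_biproduct (X1 X2 B : C)
    (s1 : hom X1 B) (r1 : hom B X1) (s2 : hom X2 B) (r2 : hom B X2) : Prop :=
  r1 ∘ s1 = idm X1 /\ r2 ∘ s2 = idm X2 /\
  is_zero_mor (r2 ∘ s1) /\ is_zero_mor (r1 ∘ s2) /\
  (forall (W : C) (f1 : hom W X1) (f2 : hom W X2),
     exists u : hom W B, (r1 ∘ u = f1 /\ r2 ∘ u = f2) /\
       forall u' : hom W B, r1 ∘ u' = f1 -> r2 ∘ u' = f2 -> u' = u) /\
  (forall (W : C) (g1 : hom X1 W) (g2 : hom X2 W),
     exists u : hom B W, (u ∘ s1 = g1 /\ u ∘ s2 = g2) /\
       forall u' : hom B W, u' ∘ s1 = g1 -> u' ∘ s2 = g2 -> u' = u).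

Definition has_biproducts : Prop :=
  forall X1 X2 : C, exists (B : C) (s1 : hom X1 B) (r1 : hom B X1)
    (s2 : hom X2 B) (r2 : hom B X2), is_biproduct s1 r1 s2 r2.

(* h = f + g in the induced commutative-monoid enrichment:
   h = codiag ∘ <f, g> through a biproduct Y ⊕ Y *)
Definition is_sum {X Y : C} (f g h : hom X Y) : Prop :=
  exists (B : C) (s1 : hom Y B) (r1 : hom B Y) (s2 : hom Y B) (r2 : hom B Y),
    is_biproduct s1 r1 s2 r2 /\
    exists (d : hom X B) (c : hom B Y),
      r1 ∘ d = f /\ r2 ∘ d = g /\ c ∘ s1 = idm Y /\ c ∘ s2 = idm Y /\
      h = c ∘ d.

(* additive: finite biproducts (zero object + binary biproducts) and every
   morphism has an additive inverse in the induced enrichment *)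
Definition additive : Prop :=
  has_zero_object /\ has_biproducts /\
  forall (X Y : C) (f : hom X Y),
    exists (g h : hom X Y), is_sum f g h /\ is_zero_mor h.

(*      f              *)
(*   K ---> Y          *)
(*  m|      |m'        *)
(*   X ---> P          *)
(*      f'             *)
Definition is_pushout {K X Y P : C} (m : hom K X) (f : hom K Y)
    (m' : hom Y P) (f' : hom X P) : Prop :=
  m' ∘ f = f' ∘ m /\
  forall (W : C) (a : hom Y W) (b : hom X W), a ∘ f = b ∘ m ->
    exists u : hom P W, (u ∘ m' = a /\ u ∘ f' = b) /\
      forall u' : hom P W, u' ∘ m' = a -> u' ∘ f' = b -> u' = u.
(*      f'             *)
(*   P ---> X          *)
(*  e'|     |e         *)
(*   Y ---> Q          *)
(*      f              *)
Definition is_pullback {X Y Q P : C} (e : hom X Q) (f : hom Y Q)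
    (e' : hom P Y) (f' : hom P X) : Prop :=
  f ∘ e' = e ∘ f' /\
  forall (W : C) (a : hom W Y) (b : hom W X), f ∘ a = e ∘ b ->
    exists u : hom W P, (e' ∘ u = a /\ f' ∘ u = b) /\
      forall u' : hom W P, e' ∘ u' = a -> f' ∘ u' = b -> u' = u.

Definition quasi_abelian : Prop :=
  additive /\
  (forall (X Y : C) (f : hom X Y), has_kernel f) /\
  (forall (X Y : C) (f : hom X Y), has_cokernel f) /\
  (forall (K X Y P : C) (m : hom K X) (f : hom K Y) (m' : hom Y P) (f' : hom X P),
      normal_mono m -> is_pushout m f m' f' -> normal_mono m') /\
  (forall (X Y Q P : C) (e : hom X Q) (f : hom Y Q) (e' : hom P Y) (f' : hom P X),
      normal_epi e -> is_pullback e f e' f' -> normal_epi e').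

End CatDefs.

Record StarCategory := {
  scat :> Category;
  star : forall X Y : scat, hom X Y -> hom Y X;
  star_id : forall X : scat, star (idm X) = idm X;
  star_comp : forall (X Y Z : scat) (f : hom X Y) (g : hom Y Z),
      star (g ∘ f) = star f ∘ star g;
  star_star : forall (X Y : scat) (f : hom X Y), star (star f) = f
}.

Arguments star {s X Y} _.

Section StarDefs.
Variable C : StarCategory.

Definition isometry {X Y : C} (f : hom X Y) : Prop := star f ∘ f = idm X.

Definition is_orthonormal_biproduct (X1 X2 B : C)
    (s1 : hom X1 B) (r1 : hom B X1) (s2 : hom X2 B) (r2 : hom B X2) : Prop :=
  is_biproduct s1 r1 s2 r2 /\ r1 = star s1 /\ r2 = star s2.

Definition preHilbert : Prop :=
  (* (R1) *) has_zero_object C /\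
  (* (R2) *) (forall X1 X2 : C, exists (B : C) (s1 : hom X1 B) (r1 : hom B X1)
                (s2 : hom X2 B) (r2 : hom B X2),
                is_orthonormal_biproduct s1 r1 s2 r2) /\
  (* (R3) *) (forall (X Y : C) (f : hom X Y),
                exists (K : C) (k : hom K X), is_kernel f k /\ isometry k) /\
  (* (R4) *) (forall (X B : C) (s1 : hom X B) (r1 : hom B X) (s2 : hom X B)
                (r2 : hom B X) (d : hom X B),
                is_orthonormal_biproduct s1 r1 s2 r2 ->
                r1 ∘ d = idm X -> r2 ∘ d = idm X -> normal_mono d).
End StarDefs.

(* The crux is additivity: biproducts only give an enrichment in commutative
   monoids, and negatives come from (R3) and (R4).  Let [k = (k1, k2)] be an
   isometric kernel of the codiagonal [X ⊕ X -> X].  The swap of [X ⊕ X]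
   restricts to an endomorphism [psi] of [K] with [1 + psi = 0], which forces
   [k1* k1 = k2* k2]; hence [2 k1*] is a left inverse of [k1].  Since the
   diagonal is normal and [k*] is its cokernel, [k1*] is monic, so [k1] is
   invertible and [k2 k1^-1] is a negative of [1_X].

   In an additive category a split epimorphism [e] with section [s] is a
   cokernel of [1 - s e]; in a *-category with isometric kernels a cokernel of
   [g] is isomorphic to [k*] for an isometric kernel [k] of [g*], hence splits.
   So normal epimorphisms are exactly the split ones, which are stable under
   pullback; the statement on pushouts is its image under [*]. *)

From Stdlib Require Import ClassicalEpsilon.

Section Kernels.
Context {C : Category}.

Lemma zero_mor_unique {X Y : C} (f g : hom X Y) :
  is_zero_mor f -> is_zero_mor g -> f = g.
Proof.
  intros [Z [a [b [[HZi _] ->]]]] [Z' [a' [b' [[_ HZt'] ->]]]].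
  destruct (HZi Z') as [c Hc], (HZi Y) as [y Hy], (HZt' X) as [x Hx].
  assert (Eb : b = b' ∘ c) by (rewrite (Hy b), (Hy (b' ∘ c)); reflexivity).
  assert (Ea : a' = c ∘ a) by (rewrite (Hx a'), (Hx (c ∘ a)); reflexivity).
  rewrite Eb, Ea, comp_assoc. reflexivity.
Qed.

Lemma zero_mor_postcomp {X Y W : C} (g : hom Y W) (f : hom X Y) :
  is_zero_mor f -> is_zero_mor (g ∘ f).
Proof.
  intros [Z [a [b [HZ ->]]]]. exists Z, a, (g ∘ b). split; [exact HZ | apply comp_assoc].
Qed.

Lemma zero_mor_precomp {X Y W : C} (f : hom X Y) (g : hom W X) :
  is_zero_mor f -> is_zero_mor (f ∘ g).
Proof.
  intros [Z [a [b [HZ ->]]]]. exists Z, (a ∘ g), b.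
  split; [exact HZ | symmetry; apply comp_assoc].
Qed.

Lemma zero_mor_ex {A B : C} (z : hom A B) (X Y : C) :
  is_zero_mor z -> exists f : hom X Y, is_zero_mor f.
Proof.
  intros [Z [_ [_ [[HZi HZt] _]]]].
  destruct (HZi Y) as [y _], (HZt X) as [x _].
  exists (y ∘ x), Z, x, y. split; [split; assumption | reflexivity].
Qed.

Lemma kernel_iff {K X Y : C} (f : hom X Y) (k : hom K X) :
  is_kernel f k <->
  is_zero_mor (f ∘ k) /\
  forall (W : C) (h : hom W X), is_zero_mor (f ∘ h) -> exists! u : hom W K, k ∘ u = h.
Proof.
  split.
  - intros [z [Hz [Ek Uk]]]. split.
    + rewrite Ek. now apply zero_mor_precomp.
    + intros W h Hh. destruct (Uk W h) as [u [Hu Uu]].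
      * apply zero_mor_unique; [exact Hh | now apply zero_mor_precomp].
      * exists u. split; [exact Hu | intros u' Hu'; symmetry; auto].
  - intros [Hk Uk]. destruct (zero_mor_ex _ X Y Hk) as [z Hz].
    exists z. split; [exact Hz | split].
    + apply zero_mor_unique; [exact Hk | now apply zero_mor_precomp].
    + intros W h Hh. destruct (Uk W h) as [u [Hu Uu]].
      * rewrite Hh. now apply zero_mor_precomp.
      * exists u. split; [exact Hu | intros u' Hu'; symmetry; auto].
Qed.

Lemma cokernel_iff {X Y Q : C} (f : hom X Y) (q : hom Y Q) :
  is_cokernel f q <->
  is_zero_mor (q ∘ f) /\
  forall (W : C) (h : hom Y W), is_zero_mor (h ∘ f) -> exists! u : hom Q W, u ∘ q = h.
Proof.
  split.
  - intros [z [Hz [Eq Uq]]]. split.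
    + rewrite Eq. now apply zero_mor_postcomp.
    + intros W h Hh. destruct (Uq W h) as [u [Hu Uu]].
      * apply zero_mor_unique; [exact Hh | now apply zero_mor_postcomp].
      * exists u. split; [exact Hu | intros u' Hu'; symmetry; auto].
  - intros [Hq Uq]. destruct (zero_mor_ex _ X Y Hq) as [z Hz].
    exists z. split; [exact Hz | split].
    + apply zero_mor_unique; [exact Hq | now apply zero_mor_postcomp].
    + intros W h Hh. destruct (Uq W h) as [u [Hu Uu]].
      * rewrite Hh. now apply zero_mor_postcomp.
      * exists u. split; [exact Hu | intros u' Hu'; symmetry; auto].
Qed.

Lemma cokernel_unique {X Y Q Q' : C} (g : hom X Y) (q : hom Y Q) (q' : hom Y Q') :
  is_cokernel g q -> is_cokernel g q' ->
  exists (u : hom Q' Q) (v : hom Q Q'), u ∘ q' = q /\ v ∘ q = q' /\ u ∘ v = idm Q.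
Proof.
  intros [Zq Uq]%cokernel_iff [Zq' Uq']%cokernel_iff.
  destruct (Uq' Q q Zq) as [u [Hu _]], (Uq Q' q' Zq') as [v [Hv _]],
    (Uq Q q Zq) as [w [_ Uw]].
  exists u, v. split; [exact Hu | split; [exact Hv |]].
  transitivity w; [symmetry |]; apply Uw.
  - rewrite <- comp_assoc, Hv, Hu. reflexivity.
  - apply comp_id_l.
Qed.

Lemma pullback_split_epi {X Y Q P : C} (e : hom X Q) (f : hom Y Q)
    (e' : hom P Y) (f' : hom P X) (s : hom Q X) :
  is_pullback e f e' f' -> e ∘ s = idm Q -> exists s' : hom Y P, e' ∘ s' = idm Y.
Proof.
  intros [_ U] Hs.
  destruct (U Y (idm Y) (s ∘ f)) as [s' [[Hs' _] _]].
  - rewrite comp_id_r, comp_assoc, Hs, comp_id_l. reflexivity.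
  - exists s'. exact Hs'.
Qed.

End Kernels.

Section StarDuality.
Context {C : StarCategory}.

Lemma star_inj {X Y : C} (f g : hom X Y) : star f = star g -> f = g.
Proof. intros H. rewrite <- (star_star f), <- (star_star g), H. reflexivity. Qed.

Lemma zero_mor_star {X Y : C} (f : hom X Y) : is_zero_mor f -> is_zero_mor (star f).
Proof.
  intros [Z [a [b [HZ ->]]]]. exists Z, (star b), (star a).
  split; [exact HZ | apply star_comp].
Qed.

Lemma equalizer_star {E X Y : C} (f g : hom X Y) (e : hom E X) :
  is_equalizer f g e -> is_coequalizer (star f) (star g) (star e).
Proof.
  intros [Efg U]. split.
  - rewrite <- !star_comp, Efg. reflexivity.
  - intros W h Hh. destruct (U W (star h)) as [u [Hu Uu]].
    { apply star_inj. rewrite !star_comp, !star_star. exact Hh. }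
    exists (star u). split.
    + rewrite <- star_comp, Hu, star_star. reflexivity.
    + intros u' Hu'. apply star_inj. rewrite star_star. apply Uu.
      rewrite <- Hu', star_comp, star_star. reflexivity.
Qed.

Lemma coequalizer_star {X Y Q : C} (f g : hom X Y) (q : hom Y Q) :
  is_coequalizer f g q -> is_equalizer (star f) (star g) (star q).
Proof.
  intros [Efg U]. split.
  - rewrite <- !star_comp, Efg. reflexivity.
  - intros W h Hh. destruct (U W (star h)) as [u [Hu Uu]].
    { apply star_inj. rewrite !star_comp, !star_star. exact Hh. }
    exists (star u). split.
    + rewrite <- star_comp, Hu, star_star. reflexivity.
    + intros u' Hu'. apply star_inj. rewrite star_star. apply Uu.
      rewrite <- Hu', star_comp, star_star. reflexivity.
Qed.

Lemma kernel_star {K X Y : C} (f : hom X Y) (k : hom K X) :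
  is_kernel f k -> is_cokernel (star f) (star k).
Proof.
  intros [z [Hz He]]. exists (star z).
  split; [apply zero_mor_star, Hz | apply equalizer_star, He].
Qed.

Lemma cokernel_star {X Y Q : C} (f : hom X Y) (q : hom Y Q) :
  is_cokernel f q -> is_kernel (star f) (star q).
Proof.
  intros [z [Hz He]]. exists (star z).
  split; [apply zero_mor_star, Hz | apply coequalizer_star, He].
Qed.

Lemma pushout_star {K X Y P : C} (m : hom K X) (f : hom K Y)
    (m' : hom Y P) (f' : hom X P) :
  is_pushout m f m' f' -> is_pullback (star m) (star f) (star m') (star f').
Proof.
  intros [E U]. split.
  - rewrite <- !star_comp, E. reflexivity.
  - intros W a b Eab. destruct (U W (star a) (star b)) as [u [[Ha Hb] Uu]].
    { apply star_inj. rewrite !star_comp, !star_star. exact Eab. }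
    exists (star u). split; [split |].
    + rewrite <- star_comp, Ha, star_star. reflexivity.
    + rewrite <- star_comp, Hb, star_star. reflexivity.
    + intros u' H1 H2. apply star_inj. rewrite star_star. apply Uu.
      * rewrite <- H1, star_comp, star_star. reflexivity.
      * rewrite <- H2, star_comp, star_star. reflexivity.
Qed.

Lemma pushout_normal_mono_of_pullback_normal_epi :
  (forall (X Y Q P : C) (e : hom X Q) (f : hom Y Q) (e' : hom P Y) (f' : hom P X),
      normal_epi e -> is_pullback e f e' f' -> normal_epi e') ->
  forall (K X Y P : C) (m : hom K X) (f : hom K Y) (m' : hom Y P) (f' : hom X P),
    normal_mono m -> is_pushout m f m' f' -> normal_mono m'.
Proof.
  intros Hpb K X Y P m f m' f' [V [g Hm]] Hpo.
  destruct (Hpb _ _ _ _ _ _ _ _ (ex_intro _ V (ex_intro _ (star g) (kernel_star _ _ Hm)))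
              (pushout_star _ _ _ _ Hpo)) as [W [h Hh]].
  exists W, (star h). rewrite <- (star_star m'). exact (cokernel_star _ _ Hh).
Qed.

Lemma cokernel_split {X Y Q K : C} (g : hom X Y) (e : hom Y Q) (k : hom K Y) :
  is_cokernel g e -> is_kernel (star g) k -> isometry k -> exists s : hom Q Y, e ∘ s = idm Q.
Proof.
  intros He Hk Hiso.
  assert (Hk' : is_cokernel g (star k)) by (rewrite <- (star_star g); exact (kernel_star _ _ Hk)).
  destruct (cokernel_unique _ _ _ He Hk') as [u [v [Hu [_ Huv]]]].
  exists (k ∘ v).
  rewrite <- Hu, comp_assoc, <- (comp_assoc k (star k) u), Hiso, comp_id_r. exact Huv.
Qed.

End StarDuality.


Class Biproducts (C : Category) := {
  biprod : C -> C -> C;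
  in1 : forall {X1 X2 : C}, hom X1 (biprod X1 X2);
  out1 : forall {X1 X2 : C}, hom (biprod X1 X2) X1;
  in2 : forall {X1 X2 : C}, hom X2 (biprod X1 X2);
  out2 : forall {X1 X2 : C}, hom (biprod X1 X2) X2;
  biprod_spec : forall X1 X2 : C, is_biproduct (@in1 X1 X2) out1 in2 out2
}.

Infix "⊕" := biprod (at level 50, left associativity).

Section Addition.
Context {C : Category} {B : Biproducts C}.

Lemma out1_in1 {X1 X2 : C} : out1 ∘ @in1 _ _ X1 X2 = idm X1.
Proof. apply (biprod_spec X1 X2). Qed.

Lemma out2_in2 {X1 X2 : C} : out2 ∘ @in2 _ _ X1 X2 = idm X2.
Proof. apply (biprod_spec X1 X2). Qed.

Lemma zero_mor_out2_in1 {X1 X2 : C} : is_zero_mor (out2 ∘ @in1 _ _ X1 X2).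
Proof. apply (biprod_spec X1 X2). Qed.

Lemma zero_mor_out1_in2 {X1 X2 : C} : is_zero_mor (out1 ∘ @in2 _ _ X1 X2).
Proof. apply (biprod_spec X1 X2). Qed.

Definition pairing_sig {W X1 X2 : C} (f : hom W X1) (g : hom W X2) :
  {u : hom W (X1 ⊕ X2) | out1 ∘ u = f /\ out2 ∘ u = g}.
Proof.
  apply constructive_indefinite_description.
  destruct (biprod_spec X1 X2) as (_ & _ & _ & _ & Hpair & _).
  destruct (Hpair W f g) as [u [Hu _]]. exists u. exact Hu.
Defined.

Definition copairing_sig {Y X1 X2 : C} (f : hom X1 Y) (g : hom X2 Y) :
  {u : hom (X1 ⊕ X2) Y | u ∘ in1 = f /\ u ∘ in2 = g}.
Proof.
  apply constructive_indefinite_description.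
  destruct (biprod_spec X1 X2) as (_ & _ & _ & _ & _ & Hcopair).
  destruct (Hcopair Y f g) as [u [Hu _]]. exists u. exact Hu.
Defined.

Definition pairing {W X1 X2 : C} (f : hom W X1) (g : hom W X2) : hom W (X1 ⊕ X2) :=
  proj1_sig (pairing_sig f g).
Definition copairing {Y X1 X2 : C} (f : hom X1 Y) (g : hom X2 Y) : hom (X1 ⊕ X2) Y :=
  proj1_sig (copairing_sig f g).

Lemma out1_pairing {W X1 X2 : C} (f : hom W X1) (g : hom W X2) : out1 ∘ pairing f g = f.
Proof. exact (proj1 (proj2_sig (pairing_sig f g))). Qed.

Lemma out2_pairing {W X1 X2 : C} (f : hom W X1) (g : hom W X2) : out2 ∘ pairing f g = g.
Proof. exact (proj2 (proj2_sig (pairing_sig f g))). Qed.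

Lemma copairing_in1 {Y X1 X2 : C} (f : hom X1 Y) (g : hom X2 Y) : copairing f g ∘ in1 = f.
Proof. exact (proj1 (proj2_sig (copairing_sig f g))). Qed.

Lemma copairing_in2 {Y X1 X2 : C} (f : hom X1 Y) (g : hom X2 Y) : copairing f g ∘ in2 = g.
Proof. exact (proj2 (proj2_sig (copairing_sig f g))). Qed.

Lemma biprod_hom_ext_out {W X1 X2 : C} (u v : hom W (X1 ⊕ X2)) :
  out1 ∘ u = out1 ∘ v -> out2 ∘ u = out2 ∘ v -> u = v.
Proof.
  intros E1 E2. destruct (biprod_spec X1 X2) as (_ & _ & _ & _ & Hpair & _).
  destruct (Hpair W (out1 ∘ v) (out2 ∘ v)) as [w [_ Uw]].
  rewrite (Uw u E1 E2), (Uw v eq_refl eq_refl). reflexivity.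
Qed.

Lemma biprod_hom_ext_in {Y X1 X2 : C} (u v : hom (X1 ⊕ X2) Y) :
  u ∘ in1 = v ∘ in1 -> u ∘ in2 = v ∘ in2 -> u = v.
Proof.
  intros E1 E2. destruct (biprod_spec X1 X2) as (_ & _ & _ & _ & _ & Hcopair).
  destruct (Hcopair Y (v ∘ in1) (v ∘ in2)) as [w [_ Uw]].
  rewrite (Uw u E1 E2), (Uw v eq_refl eq_refl). reflexivity.
Qed.

Lemma pairing_comp {V W X1 X2 : C} (f : hom W X1) (g : hom W X2) (h : hom V W) :
  pairing f g ∘ h = pairing (f ∘ h) (g ∘ h).
Proof.
  apply biprod_hom_ext_out;
    rewrite comp_assoc, ?out1_pairing, ?out2_pairing; reflexivity.
Qed.

Lemma pairing_eta {W X1 X2 : C} (u : hom W (X1 ⊕ X2)) : pairing (out1 ∘ u) (out2 ∘ u) = u.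
Proof. apply biprod_hom_ext_out; rewrite ?out1_pairing, ?out2_pairing; reflexivity. Qed.

Lemma zero_mor_biprod {W X1 X2 : C} (u : hom W (X1 ⊕ X2)) :
  is_zero_mor (out1 ∘ u) -> is_zero_mor (out2 ∘ u) -> is_zero_mor u.
Proof.
  intros H1 H2. destruct (zero_mor_ex _ W (X1 ⊕ X2) H1) as [z Hz].
  replace u with z; [exact Hz |].
  apply biprod_hom_ext_out; apply zero_mor_unique; auto; now apply zero_mor_postcomp.
Qed.

Lemma pairing_zero_r {W X1 X2 : C} (f : hom W X1) (z : hom W X2) :
  is_zero_mor z -> pairing f z = in1 ∘ f.
Proof.
  intros Hz. apply biprod_hom_ext_out; rewrite ?out1_pairing, ?out2_pairing, comp_assoc.
  - rewrite out1_in1, comp_id_l. reflexivity.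
  - apply zero_mor_unique; [exact Hz |]. apply zero_mor_precomp, zero_mor_out2_in1.
Qed.

Lemma pairing_zero_l {W X1 X2 : C} (z : hom W X1) (f : hom W X2) :
  is_zero_mor z -> pairing z f = in2 ∘ f.
Proof.
  intros Hz. apply biprod_hom_ext_out; rewrite ?out1_pairing, ?out2_pairing, comp_assoc.
  - apply zero_mor_unique; [exact Hz |]. apply zero_mor_precomp, zero_mor_out1_in2.
  - rewrite out2_in2, comp_id_l. reflexivity.
Qed.

Definition diag (X : C) : hom X (X ⊕ X) := pairing (idm X) (idm X).
Definition codiag (Y : C) : hom (Y ⊕ Y) Y := copairing (idm Y) (idm Y).
Definition add {X Y : C} (f g : hom X Y) : hom X Y := codiag Y ∘ pairing f g.

Lemma add_precomp {V X Y : C} (f g : hom X Y) (h : hom V X) :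
  add f g ∘ h = add (f ∘ h) (g ∘ h).
Proof. unfold add. rewrite <- comp_assoc, pairing_comp. reflexivity. Qed.

Lemma copairing_pairing {W X1 X2 Y : C} (a : hom X1 Y) (b : hom X2 Y)
    (x : hom W X1) (y : hom W X2) :
  copairing a b ∘ pairing x y = add (a ∘ x) (b ∘ y).
Proof.
  assert (E : copairing a b = codiag Y ∘ pairing (a ∘ out1) (b ∘ out2)).
  { apply biprod_hom_ext_in; rewrite <- comp_assoc, pairing_comp, <- !comp_assoc.
    - rewrite copairing_in1, out1_in1, comp_id_r, pairing_zero_r.
      + unfold codiag. rewrite comp_assoc, copairing_in1, comp_id_l. reflexivity.
      + apply zero_mor_postcomp, zero_mor_out2_in1.
    - rewrite copairing_in2, out2_in2, comp_id_r, pairing_zero_l.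
      + unfold codiag. rewrite comp_assoc, copairing_in2, comp_id_l. reflexivity.
      + apply zero_mor_postcomp, zero_mor_out1_in2. }
  rewrite E. unfold add.
  rewrite <- comp_assoc, pairing_comp, <- !comp_assoc, out1_pairing, out2_pairing.
  reflexivity.
Qed.

Lemma add_postcomp {X Y V : C} (f g : hom X Y) (h : hom Y V) :
  h ∘ add f g = add (h ∘ f) (h ∘ g).
Proof.
  assert (E : h ∘ codiag Y = copairing h h).
  { unfold codiag. apply biprod_hom_ext_in;
      rewrite <- comp_assoc, ?copairing_in1, ?copairing_in2; apply comp_id_r. }
  unfold add at 1. rewrite comp_assoc, E. apply copairing_pairing.
Qed.

Lemma add_copairing {X Y : C} (f g : hom X Y) : add f g = copairing f g ∘ diag X.
Proof. unfold diag. rewrite copairing_pairing, !comp_id_r. reflexivity. Qed.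

Lemma add_zero_r {X Y : C} (f z : hom X Y) : is_zero_mor z -> add f z = f.
Proof.
  intros Hz. unfold add, codiag.
  rewrite pairing_zero_r, comp_assoc, copairing_in1, comp_id_l by exact Hz. reflexivity.
Qed.

Lemma add_zero_l {X Y : C} (z f : hom X Y) : is_zero_mor z -> add z f = f.
Proof.
  intros Hz. unfold add, codiag.
  rewrite pairing_zero_l, comp_assoc, copairing_in2, comp_id_l by exact Hz. reflexivity.
Qed.

Lemma add_interchange {X Y : C} (a b c d : hom X Y) :
  add (add a b) (add c d) = add (add a c) (add b d).
Proof.
  rewrite (add_copairing a b), (add_copairing c d), <- add_precomp, (add_copairing (add a c)).
  f_equal. apply biprod_hom_ext_in; unfold add;
    rewrite ?copairing_in1, ?copairing_in2, <- comp_assoc, pairing_comp,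
      ?copairing_in1, ?copairing_in2; reflexivity.
Qed.

Lemma add_comm {X Y : C} (a b : hom X Y) : add a b = add b a.
Proof.
  destruct (zero_mor_ex _ X Y (@zero_mor_out2_in1 X X)) as [z Hz].
  pose proof (add_interchange z a b z) as E.
  rewrite (add_zero_l z a), (add_zero_l z b), (add_zero_r a z), (add_zero_r b z) in E
    by exact Hz. exact E.
Qed.

Lemma add_assoc {X Y : C} (a b c : hom X Y) : add (add a b) c = add a (add b c).
Proof.
  destruct (zero_mor_ex _ X Y (@zero_mor_out2_in1 X X)) as [z Hz].
  pose proof (add_interchange a b z c) as E.
  rewrite (add_zero_l z c), (add_zero_r a z) in E by exact Hz. exact E.
Qed.

Lemma add_opp_unique {X Y : C} (a b b' : hom X Y) :
  is_zero_mor (add a b) -> is_zero_mor (add a b') -> b = b'.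
Proof.
  intros H H'.
  rewrite <- (add_zero_r b (add a b')), <- add_assoc, (add_comm b a), add_zero_l by assumption.
  reflexivity.
Qed.

Lemma add_is_sum {X Y : C} (f g : hom X Y) : is_sum f g (add f g).
Proof.
  exists (Y ⊕ Y), in1, out1, in2, out2. split; [apply biprod_spec |].
  exists (pairing f g), (codiag Y).
  repeat split; apply out1_pairing || apply out2_pairing
             || apply copairing_in1 || apply copairing_in2.
Qed.

Lemma zero_mor_add_comp_opp {X W : C} (n : hom X X) (h : hom X W) :
  is_zero_mor (add (idm X) n) -> is_zero_mor (add h (h ∘ n)).
Proof.
  intros Hn. rewrite <- (comp_id_r h) at 1. rewrite <- add_postcomp.
  now apply zero_mor_postcomp.
Qed.

Lemma zero_mor_add_opp_comp {W X : C} (n : hom X X) (h : hom W X) :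
  is_zero_mor (add (idm X) n) -> is_zero_mor (add h (n ∘ h)).
Proof.
  intros Hn. rewrite <- (comp_id_l h) at 1. rewrite <- add_precomp.
  now apply zero_mor_precomp.
Qed.

Lemma opp_idm_conj {X Y : C} (a : hom X X) (b : hom Y Y) (g : hom X Y) :
  is_zero_mor (add (idm X) a) -> is_zero_mor (add (idm Y) b) -> b ∘ (g ∘ a) = g.
Proof.
  intros Ha Hb. symmetry. apply (add_opp_unique (g ∘ a)).
  - rewrite add_comm. now apply zero_mor_add_comp_opp.
  - now apply zero_mor_add_opp_comp.
Qed.

Lemma additive_of_opp_idm :
  has_zero_object C -> (forall X : C, exists n : hom X X, is_zero_mor (add (idm X) n)) ->
  additive C.
Proof.
  intros HZ Hopp. split; [exact HZ | split].
  - intros X1 X2. exists (X1 ⊕ X2), in1, out1, in2, out2. apply biprod_spec.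
  - intros X Y f. destruct (Hopp Y) as [n Hn].
    exists (n ∘ f), (add f (n ∘ f)).
    split; [apply add_is_sum | now apply zero_mor_add_opp_comp].
Qed.

Lemma split_epi_normal {P Y : C} (e : hom P Y) (s : hom Y P) :
  (exists n : hom P P, is_zero_mor (add (idm P) n)) -> e ∘ s = idm Y -> normal_epi e.
Proof.
  intros [n Hn] Hs. exists P, (add (idm P) (n ∘ (s ∘ e))). apply cokernel_iff.
  assert (Hd : forall W (h : hom P W),
             h ∘ add (idm P) (n ∘ (s ∘ e)) = add h (h ∘ n ∘ (s ∘ e))).
  { intros W h. rewrite add_postcomp, comp_id_r, comp_assoc. reflexivity. }
  assert (Hse : forall W (h : hom P W), is_zero_mor (add (h ∘ (s ∘ e)) (h ∘ n ∘ (s ∘ e)))).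
  { intros W h. rewrite <- add_precomp. now apply zero_mor_precomp, zero_mor_add_comp_opp. }
  split.
  - rewrite Hd. specialize (Hse _ e).
    replace (e ∘ (s ∘ e)) with e in Hse by (rewrite comp_assoc, Hs, comp_id_l; reflexivity).
    exact Hse.
  - intros W h Hh. rewrite Hd in Hh.
    assert (Eh : h ∘ (s ∘ e) = h).
    { apply (add_opp_unique (h ∘ n ∘ (s ∘ e))); rewrite add_comm; [apply Hse | exact Hh]. }
    exists (h ∘ s). split.
    + rewrite <- comp_assoc. exact Eh.
    + intros u' Hu'. rewrite <- Hu', <- comp_assoc, Hs, comp_id_r. reflexivity.
Qed.

Definition swap (X : C) : hom (X ⊕ X) (X ⊕ X) := pairing out2 out1.

Lemma swap_in1 (X : C) : swap X ∘ in1 = in2.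
Proof.
  unfold swap. rewrite pairing_comp, out1_in1, pairing_zero_l, comp_id_r
    by apply zero_mor_out2_in1.
  reflexivity.
Qed.

Lemma swap_in2 (X : C) : swap X ∘ in2 = in1.
Proof.
  unfold swap. rewrite pairing_comp, out2_in2, pairing_zero_r, comp_id_r
    by apply zero_mor_out1_in2.
  reflexivity.
Qed.

Lemma codiag_swap (X : C) : codiag X ∘ swap X = codiag X.
Proof.
  apply biprod_hom_ext_in; rewrite <- comp_assoc, ?swap_in1, ?swap_in2; unfold codiag;
    rewrite ?copairing_in1, ?copairing_in2; reflexivity.
Qed.

End Addition.


Class Orthonormal (C : StarCategory) (B : Biproducts C) : Prop := {
  out1_star : forall X1 X2 : C, @out1 C B X1 X2 = star in1;
  out2_star : forall X1 X2 : C, @out2 C B X1 X2 = star in2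
}.

Section OrthonormalBiproducts.
Context {C : StarCategory} {B : Biproducts C} {HB : Orthonormal C B}.

Lemma star_pairing {W X1 X2 : C} (f : hom W X1) (g : hom W X2) :
  star (pairing f g) = copairing (star f) (star g).
Proof.
  apply biprod_hom_ext_in; rewrite ?copairing_in1, ?copairing_in2.
  - rewrite <- (star_star (@in1 _ _ X1 X2)), <- star_comp, <- out1_star, out1_pairing.
    reflexivity.
  - rewrite <- (star_star (@in2 _ _ X1 X2)), <- star_comp, <- out2_star, out2_pairing.
    reflexivity.
Qed.

Lemma star_diag (X : C) : star (diag X) = codiag X.
Proof. unfold diag, codiag. rewrite star_pairing, star_id. reflexivity. Qed.

Lemma star_swap (X : C) : star (swap X) = swap X.
Proof.
  apply biprod_hom_ext_in; unfold swap at 1;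
    rewrite star_pairing, out1_star, out2_star, !star_star,
      ?copairing_in1, ?copairing_in2, ?swap_in1, ?swap_in2; reflexivity.
Qed.

End OrthonormalBiproducts.

Section OppositeOfIdentity.
Context {C : StarCategory} {B : Biproducts C} {HB : Orthonormal C B}.
Variables (X K : C) (k : hom K (X ⊕ X)).
Hypotheses (diag_normal : normal_mono (diag X))
  (k_kernel : is_kernel (codiag X) k) (k_isometry : isometry k).

Let k1 := out1 ∘ k.
Let k2 := out2 ∘ k.

Lemma zero_mor_add_k1_k2 : is_zero_mor (add k1 k2).
Proof. unfold add, k1, k2. rewrite pairing_eta. exact (proj1 (proj1 (kernel_iff _ _) k_kernel)). Qed.

Lemma star_kernel_pairing {W : C} (x y : hom W X) :
  star k ∘ pairing x y = add (star k1 ∘ x) (star k2 ∘ y).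
Proof. rewrite <- (pairing_eta k) at 1. rewrite star_pairing. apply copairing_pairing. Qed.

(* If [k1* x = k1* y] then [k* (x, y) = k* (diag X) y = 0]; as [k*] is a cokernel of
   [diag X], every [q] with kernel [diag X] kills [(x, y)], which thus factors through
   [diag X]. *)
Lemma star_k1_monic {W : C} (x y : hom W X) : star k1 ∘ x = star k1 ∘ y -> x = y.
Proof.
  intros Exy.
  destruct diag_normal as [V [q [Zq Uq]%kernel_iff]].
  pose proof (kernel_star _ _ k_kernel) as Hc.
  rewrite <- star_diag, star_star in Hc.
  apply cokernel_iff in Hc as [Zc Uc].
  destruct (Uc V q Zq) as [phi [Ephi _]].
  assert (Z : is_zero_mor (q ∘ pairing x y)).
  { rewrite <- Ephi, <- comp_assoc, star_kernel_pairing, Exy, <- star_kernel_pairing.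
    replace (pairing y y) with (diag X ∘ y)
      by (unfold diag; rewrite pairing_comp, !comp_id_l; reflexivity).
    apply zero_mor_postcomp. rewrite comp_assoc. now apply zero_mor_precomp. }
  destruct (Uq W (pairing x y) Z) as [t [Et _]].
  assert (Ex : x = t)
    by (rewrite <- (out1_pairing x y), <- Et, comp_assoc; unfold diag;
        rewrite out1_pairing; apply comp_id_l).
  assert (Ey : y = t)
    by (rewrite <- (out2_pairing x y), <- Et, comp_assoc; unfold diag;
        rewrite out2_pairing; apply comp_id_l).
  rewrite Ex, Ey. reflexivity.
Qed.

Let psi := star k ∘ swap X ∘ k.

Lemma kernel_swap : k ∘ psi = swap X ∘ k.
Proof.
  destruct (proj1 (kernel_iff _ _) k_kernel) as [Zk Uk].
  destruct (Uk K (swap X ∘ k)) as [u [Hu _]].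
  { rewrite comp_assoc, codiag_swap. exact Zk. }
  assert (Epsi : psi = u).
  { unfold psi. rewrite <- comp_assoc, <- Hu, comp_assoc, k_isometry. apply comp_id_l. }
  rewrite Epsi. exact Hu.
Qed.

Lemma k1_psi : k1 ∘ psi = k2.
Proof.
  unfold k1, k2. rewrite <- comp_assoc, kernel_swap, comp_assoc.
  unfold swap. rewrite out1_pairing. reflexivity.
Qed.

Lemma k2_psi : k2 ∘ psi = k1.
Proof.
  unfold k1, k2. rewrite <- comp_assoc, kernel_swap, comp_assoc.
  unfold swap. rewrite out2_pairing. reflexivity.
Qed.

Lemma zero_mor_add_idm_psi : is_zero_mor (add (idm K) psi).
Proof.
  assert (Z : is_zero_mor (k ∘ add (idm K) psi)).
  { rewrite add_postcomp, comp_id_r.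
    apply zero_mor_biprod; rewrite add_postcomp, comp_assoc.
    - change (out1 ∘ k) with k1. rewrite k1_psi. exact zero_mor_add_k1_k2.
    - change (out2 ∘ k) with k2. rewrite k2_psi, add_comm. exact zero_mor_add_k1_k2. }
  replace (add (idm K) psi) with (star k ∘ (k ∘ add (idm K) psi))
    by (rewrite comp_assoc, k_isometry; apply comp_id_l).
  now apply zero_mor_postcomp.
Qed.

Lemma star_psi : star psi = psi.
Proof. unfold psi. rewrite !star_comp, star_swap, star_star, comp_assoc. reflexivity. Qed.

Lemma star_k2_k2 : star k2 ∘ k2 = star k1 ∘ k1.
Proof.
  rewrite <- k1_psi, star_comp, star_psi, <- comp_assoc, (comp_assoc psi k1 (star k1)).
  apply opp_idm_conj; exact zero_mor_add_idm_psi.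
Qed.

Let rho := add (star k1) (star k1).

Lemma rho_k1 : rho ∘ k1 = idm K.
Proof.
  unfold rho. rewrite add_precomp. rewrite <- star_k2_k2 at 2.
  rewrite <- star_kernel_pairing. unfold k1, k2. rewrite pairing_eta. exact k_isometry.
Qed.

Lemma k1_rho : k1 ∘ rho = idm X.
Proof.
  apply star_inj, star_k1_monic.
  rewrite <- !star_comp, <- comp_assoc, rho_k1, comp_id_r, comp_id_l. reflexivity.
Qed.

Lemma opp_idm_of_kernel_codiag : exists n : hom X X, is_zero_mor (add (idm X) n).
Proof.
  exists (k2 ∘ rho). rewrite <- k1_rho, <- add_precomp.
  apply zero_mor_precomp, zero_mor_add_k1_k2.
Qed.

End OppositeOfIdentity.


Section PreHilbert.
Variable C : StarCategory.
Hypothesis orthonormal_biproducts_ex : forall X1 X2 : C,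
  exists (B : C) (s1 : hom X1 B) (r1 : hom B X1) (s2 : hom X2 B) (r2 : hom B X2),
    is_orthonormal_biproduct s1 r1 s2 r2.
Hypothesis isometric_kernels : forall (X Y : C) (f : hom X Y),
  exists (K : C) (k : hom K X), is_kernel f k /\ isometry k.
Hypothesis diagonal_normal : forall (X B : C) (s1 : hom X B) (r1 : hom B X) (s2 : hom X B)
  (r2 : hom B X) (d : hom X B),
  is_orthonormal_biproduct s1 r1 s2 r2 -> r1 ∘ d = idm X -> r2 ∘ d = idm X -> normal_mono d.

Definition orthonormal_biproduct (X1 X2 : C) :
  {t : {B : C & (hom X1 B * hom X2 B)%type} |
    is_biproduct (fst (projT2 t)) (star (fst (projT2 t)))
                 (snd (projT2 t)) (star (snd (projT2 t)))}.
Proof.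
  apply constructive_indefinite_description.
  destruct (orthonormal_biproducts_ex X1 X2) as (B & s1 & r1 & s2 & r2 & Hb & -> & ->).
  exists (existT _ B (s1, s2)). exact Hb.
Defined.

#[local] Instance orthonormal_biproducts : Biproducts C := {|
  biprod X1 X2 := projT1 (proj1_sig (orthonormal_biproduct X1 X2));
  in1 X1 X2 := fst (projT2 (proj1_sig (orthonormal_biproduct X1 X2)));
  out1 X1 X2 := star (fst (projT2 (proj1_sig (orthonormal_biproduct X1 X2))));
  in2 X1 X2 := snd (projT2 (proj1_sig (orthonormal_biproduct X1 X2)));
  out2 X1 X2 := star (snd (projT2 (proj1_sig (orthonormal_biproduct X1 X2))));
  biprod_spec X1 X2 := proj2_sig (orthonormal_biproduct X1 X2)
|}.

#[local] Instance orthonormal_biproducts_orthonormal : Orthonormal C orthonormal_biproducts.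
Proof. split; reflexivity. Qed.

Lemma opp_idm_ex (X : C) : exists n : hom X X, is_zero_mor (add (idm X) n).
Proof.
  destruct (isometric_kernels _ _ (codiag X)) as (K & k & Hk & Hiso).
  apply (opp_idm_of_kernel_codiag X K k); [| exact Hk | exact Hiso].
  apply (diagonal_normal X (X ⊕ X) in1 out1 in2 out2).
  - split; [apply biprod_spec | split; reflexivity].
  - apply out1_pairing.
  - apply out2_pairing.
Qed.

Lemma pullback_normal_epi (X Y Q P : C) (e : hom X Q) (f : hom Y Q)
    (e' : hom P Y) (f' : hom P X) :
  normal_epi e -> is_pullback e f e' f' -> normal_epi e'.
Proof.
  intros [X0 [g Hg]] Hpb.
  destruct (isometric_kernels _ _ (star g)) as (K & k & Hk & Hiso).
  destruct (cokernel_split _ _ _ Hg Hk Hiso) as [s Hs].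
  destruct (pullback_split_epi _ _ _ _ _ Hpb Hs) as [s' Hs'].
  exact (split_epi_normal _ _ (opp_idm_ex P) Hs').
Qed.

End PreHilbert.

Theorem proposition3p6 (C : StarCategory) :
  preHilbert C -> quasi_abelian C.
Proof.
  intros (Hzero & Hbiprod & Hker & Hdiag).
  pose proof (pullback_normal_epi C Hbiprod Hker Hdiag) as Hpullback.
  split; [| split; [| split; [| split]]].
  - exact (additive_of_opp_idm (B := orthonormal_biproducts C Hbiprod) Hzero
             (opp_idm_ex C Hbiprod Hker Hdiag)).
  - intros X Y f. destruct (Hker X Y f) as (K & k & Hk & _). exists K, k. exact Hk.
  - intros X Y f. destruct (Hker Y X (star f)) as (K & k & Hk & _).
    exists K, (star k). rewrite <- (star_star f). exact (kernel_star _ _ Hk).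
  - exact (pushout_normal_mono_of_pullback_normal_epi Hpullback).
  - exact Hpullback.
Qed.
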